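(* Let $X$ be a Banach space and let $\alpha$ be a left tensorial norm on $\ell_\infty\otimes X$. Then there exist a Banach lattice $L$ and a linear isometry $J\colon X\to L$ such that for all $k\in\mathbb{N}$ and all $y_1,\dots,y_k\in X$, $$\Big\|\bigvee_{j=1}^k |Jy_j|\Big\|_L=\alpha\Big(\sum_{j=1}^k e_j\otimes y_j\Big).$$
   Context: All spaces are real. $(e_j)$ denotes the unit vector basis of $c_0\subseteq\ell_\infty$. A norm $\alpha$ on $Y\otimes X$ ($Y,X$ Banach spaces) is a crossnorm if $\alpha(y\otimes x)=\|y\|\|x\|$; it is called left tensorial if it is a crossnorm and for every bounded operator $T\colon Y\to Y$ the operator $T\otimes I_X$ is bounded on $(Y\otimes X,\alpha)$ with $\|T\otimes I_X\|\le\|T\|$, where $I_X$ is the identity of $X$. $\bigvee$ denotes the lattice supremum and $|\cdot|$ the lattice modulus. *)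

From HB Require Import structures.
From mathcomp Require Import all_boot all_order all_algebra.
From mathcomp Require Import all_classical all_reals all_analysis.
Set Implicit Arguments. Unset Strict Implicit. Unset Printing Implicit Defensive.
Import Order.TTheory GRing.Theory Num.Theory.
Import numFieldNormedType.Exports.
Local Open Scope classical_set_scope.
Local Open Scope ring_scope.

Definition linf_bounded {R : realType} (y : nat -> R) : Prop :=
  exists M : R, forall n, `|y n| <= M.

Definition linf_norm {R : realType} (y : nat -> R) : R :=
  sup (range (fun n => `|y n|)).

(* unit vector e_j of c_0 (indices start at 0) *)
Definition unit_vec {R : realType} (j : nat) : nat -> R :=
  fun n => if n == j then 1 else 0.

Definition linf_bounded_op {R : realType} (T : (nat -> R) -> (nat -> R)) : Prop :=
  (forall y, linf_bounded y -> linf_bounded (T y)) /\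
  (forall (a : R) y z, linf_bounded y -> linf_bounded z ->
     T (fun n => a * y n + z n) = (fun n => a * T y n + T z n)) /\
  (exists C : R, forall y, linf_bounded y -> linf_norm (T y) <= C * linf_norm y).

Definition linf_opnorm {R : realType} (T : (nat -> R) -> (nat -> R)) : R :=
  inf [set C : R | 0 <= C /\
        forall y, linf_bounded y -> linf_norm (T y) <= C * linf_norm y].

(* ---------- the algebraic tensor product l_infinity (x) X ----------
   An elementary-tensor sum  sum_i y_i (x) x_i  is represented by the
   X-valued sequence  n |-> sum_i y_i(n) x_i ; this canonical map from
   l_infinity (x) X into X^N is injective, so l_infinity (x) X is identified
   with its image. *)
Definition tensor_of {R : realType} {X : normedModType R} (m : nat)
  (ys : nat -> nat -> R) (xs : nat -> X) : nat -> X :=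
  fun n => \sum_(i < m) ys i n *: xs i.

Definition is_tensor {R : realType} {X : normedModType R} (u : nat -> X) : Prop :=
  exists m (ys : nat -> nat -> R) (xs : nat -> X),
    (forall i, linf_bounded (ys i)) /\ u = tensor_of m ys xs.

Definition tensor_norm {R : realType} {X : normedModType R}
  (alpha : (nat -> X) -> R) : Prop :=
  (forall u, is_tensor u -> 0 <= alpha u) /\
  (forall u, is_tensor u -> alpha u = 0 -> u = (fun _ => 0)) /\
  (forall u v, is_tensor u -> is_tensor v ->
      alpha (fun n => u n + v n) <= alpha u + alpha v) /\
  (forall (a : R) u, is_tensor u -> alpha (fun n => a *: u n) = `|a| * alpha u).

Definition crossnorm {R : realType} {X : normedModType R}
  (alpha : (nat -> X) -> R) : Prop :=
  tensor_norm alpha /\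
  forall (y : nat -> R) (x : X), linf_bounded y ->
    alpha (fun n => y n *: x) = linf_norm y * `|x|.

Definition left_tensorial {R : realType} {X : normedModType R}
  (alpha : (nat -> X) -> R) : Prop :=
  crossnorm alpha /\
  forall T : (nat -> R) -> (nat -> R), linf_bounded_op T ->
  forall m (ys : nat -> nat -> R) (xs : nat -> X),
    (forall i, linf_bounded (ys i)) ->
    alpha (tensor_of m (fun i => T (ys i)) xs)
      <= linf_opnorm T * alpha (tensor_of m ys xs).

Record banach_lattice (R : realType) := BanachLattice {
  bl_carrier :> completeNormedModType R;
  bl_le : bl_carrier -> bl_carrier -> Prop;
  bl_join : bl_carrier -> bl_carrier -> bl_carrier;
  bl_le_refl : forall x, bl_le x x;
  bl_le_anti : forall x y, bl_le x y -> bl_le y x -> x = y;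
  bl_le_trans : forall x y z, bl_le x y -> bl_le y z -> bl_le x z;
  bl_le_add : forall x y z, bl_le x y -> bl_le (x + z) (y + z);
  bl_le_scale : forall (a : R) x y, 0 <= a -> bl_le x y -> bl_le (a *: x) (a *: y);
  bl_join_l : forall x y, bl_le x (bl_join x y);
  bl_join_r : forall x y, bl_le y (bl_join x y);
  bl_join_least : forall x y z, bl_le x z -> bl_le y z -> bl_le (bl_join x y) z;
  bl_norm_mono : forall x y,
    bl_le (bl_join x (- x)) (bl_join y (- y)) -> `|x| <= `|y|
}.

Definition bl_abs {R : realType} (L : banach_lattice R) (x : L) : L :=
  bl_join x (- x).

Fixpoint bl_sup_upto {R : realType} (L : banach_lattice R) (f : nat -> L) (k : nat) : L :=
  match k with
  | 0 => f 0%N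
  | k'.+1 => bl_join (bl_sup_upto f k') (f k)
  end.

Definition linear_isometry {R : realType} {X Y : normedModType R} (J : X -> Y) : Prop :=
  (forall (a : R) x y, J (a *: x + y) = a *: J x + J y) /\
  (forall x, `|J x| = `|x|).

(* Call a finite family (w_i)_(i<r) of linear functionals on X contractive if
   sum_i max_j |w_i z_j| <= alpha (sum_j e_j (x) z_j) for all z.  Let L consist of the maps F
   sending each contractive family A to a vector F_A of l_1^r, normed by sup_A ||F_A||_1 and
   ordered pointwise, and let J x = (w_i x)_(A,i).  Then || sup_j |J y_j| || is
   sup_A sum_i max_j |w_i y_j|, which contractivity bounds by alpha (sum_j e_j (x) y_j).
   Conversely, Hahn-Banach gives a linear phi on l_inf (x) X dominated by alpha and attaining it
   at sum_j e_j (x) y_j, and w_i := phi (e_i (x) _) is contractive: if j_i maximises |w_i z_j|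
   and s_i is the sign of w_i z_(j_i), left tensoriality for the norm-one operator
   t |-> (s_i t_(j_i))_i gives alpha (sum_i e_i (x) s_i z_(j_i)) <= alpha (sum_j e_j (x) z_j).
   Hahn-Banach itself follows from Zorn's lemma: a minimal sublinear functional q is additive,
   since its shift x |-> inf_(t >= 0) q (x + t a) - t q a is sublinear and below q. *)

From HB Require Import structures.
From mathcomp Require Import all_boot all_order all_algebra.
From mathcomp Require Import all_classical all_reals all_analysis.
Set Implicit Arguments. Unset Strict Implicit. Unset Printing Implicit Defensive.
Import Order.TTheory GRing.Theory Num.Theory.
Import numFieldNormedType.Exports.
Local Open Scope classical_set_scope.
Local Open Scope ring_scope.

(** * Hahn-Banach for sublinear functionals *)

Section HahnBanach.
Variables (R : realType) (V : lmodType R).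

Record sublinear (q : V -> R) : Prop := Sublinear {
  sublinearD : forall x y, q (x + y) <= q x + q y;
  sublinearZ : forall (t : R) x, 0 <= t -> q (t *: x) = t * q x }.

Lemma sublinear0 q : sublinear q -> q 0 = 0.
Proof. by move=> hq; rewrite -(scale0r (0 : V)) sublinearZ // mul0r. Qed.

Lemma sublinear_oppr_le q x : sublinear q -> - q (- x) <= q x.
Proof.
move=> hq; have := sublinearD hq x (- x).
by rewrite subrr sublinear0 // -lerBlDr sub0r.
Qed.

Lemma superhomogeneous_sublinear (m : V -> R) :
  (forall x y, m (x + y) <= m x + m y) -> m 0 = 0 ->
  (forall (s : R) x, 0 < s -> s * m x <= m (s *: x)) -> sublinear m.
Proof.
move=> mD m0 homo; split=> // s x; rewrite le_eqVlt => /orP[/eqP <-|s0].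
  by rewrite scale0r mul0r.
apply/eqP; rewrite eq_le homo // andbT.
have := homo s^-1 (s *: x); rewrite invr_gt0 => /(_ s0).
by rewrite scalerA mulVf ?gt_eqF // scale1r ler_pdivrMl // mulrC.
Qed.

Definition sublinear_shift (q : V -> R) (a x : V) : R :=
  inf [set q (x + t *: a) - t * q a | t in [set t : R | 0 <= t]].

Section Shift.
Variables (q : V -> R) (a : V).
Hypothesis hq : sublinear q.

Lemma sublinear_shift_lbound x :
  lbound [set q (x + t *: a) - t * q a | t in [set t : R | 0 <= t]] (- q (- x)).
Proof.
move=> _ [t t0 <-]; rewrite lerBrDr addrC lerBlDr.
have := sublinearD hq (x + t *: a) (- x).
by rewrite [x + _]addrC addrK (sublinearZ hq _ t0).
Qed.

Lemma sublinear_shift_le x t : 0 <= t ->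
  sublinear_shift q a x <= q (x + t *: a) - t * q a.
Proof.
move=> t0; apply: ge_inf; last by exists t.
by exists (- q (- x)); apply: sublinear_shift_lbound.
Qed.

Lemma sublinear_shift_ge x c :
  (forall t, 0 <= t -> c <= q (x + t *: a) - t * q a) -> c <= sublinear_shift q a x.
Proof.
move=> h; apply: lb_le_inf; first by exists (q (x + 0 *: a) - 0 * q a), 0 => /=.
by move=> _ [t t0 <-]; apply: h.
Qed.

Lemma sublinear_shift_le_id x : sublinear_shift q a x <= q x.
Proof. by have := sublinear_shift_le x (lexx 0); rewrite scale0r addr0 mul0r subr0. Qed.

Lemma sublinear_shift_ge_opp x : - q (- x) <= sublinear_shift q a x.
Proof. by apply: sublinear_shift_ge => t t0; apply: sublinear_shift_lbound; exists t. Qed.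

Lemma sublinear_shiftD x y : sublinear_shift q a (x + y) <=
  sublinear_shift q a x + sublinear_shift q a y.
Proof.
rewrite -lerBlDr; apply: sublinear_shift_ge => t t0.
rewrite lerBlDr [_ + sublinear_shift _ _ _]addrC -lerBlDr.
apply: sublinear_shift_ge => u u0; rewrite lerBlDr [_ + (_ - _)]addrC.
apply: le_trans (sublinear_shift_le _ (addr_ge0 t0 u0)) _.
rewrite addrACA -opprD -mulrDl lerD2r scalerDl addrACA.
exact: sublinearD.
Qed.

Lemma sublinear_shift_sublinear : sublinear (sublinear_shift q a).
Proof.
apply: superhomogeneous_sublinear; first exact: sublinear_shiftD.
  apply/le_anti; have := sublinear_shift_ge_opp 0; have := sublinear_shift_le_id 0.
  by rewrite oppr0 (sublinear0 hq) oppr0 => -> ->.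
move=> s x s0; apply: sublinear_shift_ge => t t0.
have -> : q (s *: x + t *: a) - t * q a = s * (q (x + (s^-1 * t) *: a) - (s^-1 * t) * q a).
  rewrite mulrBr -(sublinearZ hq _ (ltW s0)) scalerDr scalerA mulrA mulfV ?gt_eqF //.
  by rewrite !mulrA mulfV ?gt_eqF // mul1r.
by rewrite ler_pM2l // sublinear_shift_le // mulr_ge0 // invr_ge0 ltW.
Qed.

End Shift.

Definition pointwise_inf (A : set (V -> R)) (x : V) : R := inf [set q x | q in A].

Lemma sublinear_chain_inf (q0 : V -> R) (A : set (V -> R)) (q1 : V -> R) :
  A q1 -> (forall q, A q -> sublinear q /\ forall x, q x <= q0 x) ->
  total_on A (fun q q' => forall x, q x <= q' x) ->
  sublinear (pointwise_inf A) /\ forall q x, A q -> pointwise_inf A x <= q x.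
Proof.
move=> Aq1 hA Atot; set m := pointwise_inf A.
have ex x : has_inf [set q x | q in A].
  split; first by exists (q1 x), q1.
  exists (- q0 (- x)) => _ [q Aq <-]; apply: le_trans (sublinear_oppr_le x (hA q Aq).1).
  by rewrite lerN2 (hA q Aq).2.
have mle q x : A q -> m x <= q x.
  by move=> Aq; apply: ge_inf; [exact: (ex x).2 | exists q].
have mge c x : (forall q, A q -> c <= q x) -> c <= m x.
  by move=> h; apply: lb_le_inf; [exact: (ex x).1 | move=> _ [q Aq <-]; apply: h].
split=> //; apply: superhomogeneous_sublinear.
- move=> x y; apply/ler_addgt0Pr => e e0.
  have e20 : 0 < e / 2 by rewrite divr_gt0.
  have [_ [q1' A1 <-] h1] := inf_adherent e20 (ex x).
  have [_ [q2' A2 <-] h2] := inf_adherent e20 (ex y).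
  rewrite {1}(splitr e) addrACA.
  have [h|h] := Atot _ _ A1 A2.
  + apply: le_trans (mle _ _ A1) _; apply: le_trans (sublinearD (hA _ A1).1 x y) _.
    by apply: lerD; [exact: ltW | exact: le_trans (h y) (ltW h2)].
  + apply: le_trans (mle _ _ A2) _; apply: le_trans (sublinearD (hA _ A2).1 x y) _.
    by apply: lerD; [exact: le_trans (h x) (ltW h1) | exact: ltW].
- apply/le_anti/andP; split; first by rewrite -(sublinear0 (hA _ Aq1).1) mle.
  by apply: mge => q Aq; rewrite (sublinear0 (hA q Aq).1).
- move=> s x s0; apply: mge => q Aq.
  by rewrite (sublinearZ (hA q Aq).1 _ (ltW s0)) ler_pM2l // mle.
Qed.

Lemma exists_minimal_sublinear (q0 : V -> R) : sublinear q0 ->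
  exists2 q, sublinear q /\ (forall x, q x <= q0 x) &
    forall q', sublinear q' -> (forall x, q' x <= q x) -> forall x, q x <= q' x.
Proof.
move=> hq0; pose T := {q : V -> R | sublinear q /\ forall x, q x <= q0 x}.
pose ge (q q' : T) := `[< forall x, sval q' x <= sval q x >].
have top : T by exists q0.
have [[q [hq qle]] qmin] : exists t : T, premaximal ge t.
  apply: (ZL_preorder top) => [t|r s t /asboolP h1 /asboolP h2|A Atot].
  - exact/asboolP.
  - by apply/asboolP => x; apply: le_trans (h2 x) (h1 x).
  have [->|/set0P[t0 At0]] := eqVneq A set0; first by exists top => s.
  have chainA : total_on (sval @` A) (fun q q' => forall x, q x <= q' x).
    move=> _ _ [s As <-] [t At <-].
    by case: (Atot s t As At) => /asboolP; [right | left].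
  have subA q : (sval @` A) q -> sublinear q /\ forall x, q x <= q0 x.
    by case=> t _ <-; exact: (proj2_sig t).
  have [inf_sub inf_le] := sublinear_chain_inf (imageP _ At0) subA chainA.
  have inf_le0 x : pointwise_inf (sval @` A) x <= q0 x.
    exact: le_trans (inf_le _ _ (imageP _ At0)) ((proj2_sig t0).2 x).
  exists (exist _ (pointwise_inf (sval @` A)) (conj inf_sub inf_le0)) => s As; apply/asboolP => x.
  exact: inf_le (imageP _ As).
exists q => // q' hq' q'le.
have q'le0 x : q' x <= q0 x by apply: le_trans (q'le x) (qle x).
by have /asboolP := qmin (exist _ q' (conj hq' q'le0)) (asboolT q'le).
Qed.

Lemma minimal_sublinear_additive q : sublinear q ->
  (forall q', sublinear q' -> (forall x, q' x <= q x) -> forall x, q x <= q' x) ->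
  {morph q : x y / x + y}.
Proof.
move=> hq qmin x a; apply/eqP; rewrite eq_le sublinearD //=.
have := qmin _ (sublinear_shift_sublinear a hq) (sublinear_shift_le_id a hq) x.
move=> /le_trans /(_ (sublinear_shift_le a hq x ler01)).
by rewrite scale1r mul1r lerBrDr.
Qed.

Lemma additive_sublinear_linear q : sublinear q -> {morph q : x y / x + y} ->
  linear_for *%R q.
Proof.
move=> hq qD c x z; rewrite qD; congr (_ + _).
have qN u : q (- u) = - q u.
  by apply/eqP; rewrite -addr_eq0 -qD addNr sublinear0.
have [c0|c0] := leP 0 c; first exact: sublinearZ.
by rewrite -[c *: x]opprK -scaleNr qN (sublinearZ hq) ?oppr_ge0 ?ltW // mulNr opprK.
Qed.

Theorem hahn_banach (p : V -> R) (y : V) : sublinear p ->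
  exists2 f : {scalar V}, (forall x, f x <= p x) & f y = p y.
Proof.
move=> hp; have hq0 := sublinear_shift_sublinear y hp.
have [f [hf fle] fmin] := exists_minimal_sublinear hq0.
pose g : {scalar V} := HB.pack f
  (GRing.isLinear.Build _ _ _ _ f (additive_sublinear_linear hf
    (minimal_sublinear_additive hf fmin))).
have gle x : g x <= p x by apply: le_trans (fle x) (sublinear_shift_le_id _ hp _).
exists g => //; apply/eqP; rewrite eq_le gle /=.
have : g (- y) <= - p y.
  have := le_trans (fle (- y)) (sublinear_shift_le y hp (- y) ler01).
  by rewrite scale1r mul1r addNr sublinear0 // sub0r.
by rewrite linearN lerN2.
Qed.

End HahnBanach.

(** * Contractions of l_inf and the norms alpha (sum_j e_j (x) y_j) *)

Section LinfOperators.
Variable R : realType.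
Implicit Types (y : nat -> R) (c : nat -> R) (f : nat -> nat).

Lemma unit_vec_bounded j : linf_bounded (@unit_vec R j).
Proof. by exists 1 => n; rewrite /unit_vec; case: eqP; rewrite ?normr1 ?normr0. Qed.

Lemma ler_linf_norm y n : linf_bounded y -> `|y n| <= linf_norm y.
Proof. by case=> M hM; apply: ub_le_sup; [exists M => _ [k _ <-] | exists n]. Qed.

Lemma linf_norm_le y (b : R) : (forall n, `|y n| <= b) -> linf_norm y <= b.
Proof. by move=> h; apply: ge_sup; [exists `|y 0%N|, 0%N | move=> _ [n _ <-]]. Qed.

Lemma linf_norm_unit_vec j : linf_norm (@unit_vec R j) = 1.
Proof.
apply/eqP; rewrite eq_le; apply/andP; split.
  by apply: linf_norm_le => n; rewrite /unit_vec; case: eqP; rewrite ?normr1 ?normr0.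
by have := ler_linf_norm j (unit_vec_bounded j); rewrite /unit_vec eqxx normr1.
Qed.

Definition reindex_op (k : nat) f c (t : nat -> R) : nat -> R :=
  fun n => if (n < k)%N then c n * t (f n) else 0.

Section Reindex.
Variables (k : nat) (f : nat -> nat) (c : nat -> R).
Hypothesis c_le1 : forall n, `|c n| <= 1.

Lemma reindex_op_norm_le t n : `|reindex_op k f c t n| <= `|t (f n)|.
Proof.
rewrite /reindex_op; case: ifP => _; last by rewrite normr0.
by rewrite normrM ler_piMl.
Qed.

Lemma linf_norm_reindex_op t : linf_bounded t ->
  linf_norm (reindex_op k f c t) <= linf_norm t.
Proof.
move=> tb; apply: linf_norm_le => n.
exact: le_trans (reindex_op_norm_le t n) (ler_linf_norm _ tb).
Qed.

Lemma reindex_op_bounded : linf_bounded_op (reindex_op k f c).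
Proof.
split; first by move=> t [M hM]; exists M => n; apply: le_trans (reindex_op_norm_le t n) _.
split; last by exists 1 => t tb; rewrite mul1r; apply: linf_norm_reindex_op.
move=> a t u _ _; apply/funext => n; rewrite /reindex_op.
by case: ifP => _; rewrite ?mulr0 ?addr0 // mulrDr mulrCA.
Qed.

Lemma reindex_opnorm_le1 : linf_opnorm (reindex_op k f c) <= 1.
Proof.
apply: ge_inf; first by exists 0 => C [].
by split=> // t tb; rewrite mul1r; apply: linf_norm_reindex_op.
Qed.

End Reindex.
End LinfOperators.

Section UnitTensorNorm.
Variables (R : realType) (X : normedModType R) (alpha : (nat -> X) -> R).

Lemma sum_unit_vecE m (v : nat -> X) n :
  \sum_(i < m) unit_vec i n *: v i = if (n < m)%N then v n else 0.
Proof.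
elim: m => [|m IH]; first by rewrite big_ord0.
rewrite big_ord_recr /= IH /unit_vec.
case: (ltngtP n m) => [nm|mn|->].
- by rewrite scale0r addr0 (ltn_trans nm (ltnSn m)).
- by rewrite scale0r addr0 ltnS leqNgt mn.
- by rewrite ltnSn add0r scale1r.
Qed.

Lemma tensor_of_unit_vecE m (v : nat -> X) n :
  tensor_of m (@unit_vec R) v n = if (n < m)%N then v n else 0.
Proof. exact: sum_unit_vecE. Qed.

Lemma is_tensor_unit m (v : nat -> X) : is_tensor (tensor_of m (@unit_vec R) v).
Proof. by exists m, (@unit_vec R), v; split=> // i; apply: unit_vec_bounded. Qed.

Definition unit_tensor_norm m (v : nat -> X) : R := alpha (tensor_of m (@unit_vec R) v).

Definition unit_slice (i : nat) (x : X) : nat -> X := fun n => unit_vec i n *: x.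

Lemma unit_slice_linear i : linear (unit_slice i).
Proof.
by move=> a x y; apply/funext => n; rewrite /unit_slice !fctE scalerDr !scalerA mulrC.
Qed.

HB.instance Definition _ i :=
  GRing.isLinear.Build R X (nat -> X) *:%R (unit_slice i) (unit_slice_linear i).

Lemma tensor_of_unit_vec_sum m v :
  tensor_of m (@unit_vec R) v = \sum_(i < m) unit_slice i (v i).
Proof. by apply/funext => n; rewrite /tensor_of fct_sumE. Qed.

Hypothesis halpha : left_tensorial alpha.

Lemma unit_tensor_norm_ge0 m v : 0 <= unit_tensor_norm m v.
Proof. exact: halpha.1.1.1 (is_tensor_unit m v). Qed.

Lemma unit_tensor_norm1 v : unit_tensor_norm 1 v = `|v 0%N|.
Proof.
rewrite /unit_tensor_norm.
have -> : tensor_of 1 (@unit_vec R) v = (fun n => unit_vec 0 n *: v 0%N).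
  by apply/funext => n; rewrite /tensor_of big_ord1.
by rewrite halpha.1.2 ?linf_norm_unit_vec ?mul1r //; apply: unit_vec_bounded.
Qed.

Lemma unit_tensor_norm_sublinear m : sublinear (unit_tensor_norm m).
Proof.
have [_ [_ [normD normZ]]] := halpha.1.1.
split=> [u v|t v t0]; rewrite /unit_tensor_norm.
  have -> : tensor_of m (@unit_vec R) (u + v) =
      (fun n => tensor_of m (@unit_vec R) u n + tensor_of m (@unit_vec R) v n).
    by apply/funext => n; rewrite /tensor_of -big_split; apply: eq_bigr => i _; rewrite scalerDr.
  exact: normD (is_tensor_unit m u) (is_tensor_unit m v).
have -> : tensor_of m (@unit_vec R) (t *: v) = (fun n => t *: tensor_of m (@unit_vec R) v n).
  apply/funext => n; rewrite /tensor_of scaler_sumr.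
  by apply: eq_bigr => i _; rewrite !scalerA mulrC.
by rewrite normZ ?ger0_norm //; apply: is_tensor_unit.
Qed.

Lemma unit_tensor_norm_trunc m v :
  unit_tensor_norm m (tensor_of m (@unit_vec R) v) = unit_tensor_norm m v.
Proof.
rewrite /unit_tensor_norm; congr alpha; apply/funext => n.
by rewrite !tensor_of_unit_vecE; case: (n < m)%N.
Qed.

Lemma unit_tensor_norm_reindex k y m z (f : nat -> nat) (c : nat -> R) :
  (forall n, `|c n| <= 1) ->
  (forall n, (n < k)%N -> (f n < m)%N /\ y n = c n *: z (f n)) ->
  unit_tensor_norm k y <= unit_tensor_norm m z.
Proof.
move=> c_le1 hy.
have := halpha.2 _ (reindex_op_bounded k f c_le1) m _ z (@unit_vec_bounded R).
have -> : tensor_of m (fun i => reindex_op k f c (unit_vec i)) z = tensor_of k (@unit_vec R) y.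
  apply/funext => n; rewrite /tensor_of sum_unit_vecE /reindex_op.
  case: ifP => nk; last by rewrite big1 // => i _; rewrite scale0r.
  have [fm ->] := hy n nk; under eq_bigr do rewrite -scalerA.
  by rewrite -scaler_sumr sum_unit_vecE fm.
move=> /le_trans; apply; rewrite -[leRHS]mul1r ler_wpM2r ?unit_tensor_norm_ge0 //.
exact: reindex_opnorm_le1.
Qed.

End UnitTensorNorm.

(** * The Banach lattice of contractive families *)

Section MaxUpto.
Variable R : realType.
Implicit Types f : nat -> R.

Fixpoint max_upto f (k : nat) : R :=
  if k is k'.+1 then Num.max (max_upto f k') (f k) else f 0%N.

Lemma max_upto_ub f k j : (j <= k)%N -> f j <= max_upto f k.
Proof.
elim: k => [|k IH]; first by rewrite leqn0 => /eqP ->.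
by rewrite leq_eqVlt ltnS le_max => /orP[/eqP ->|/IH ->]; rewrite ?lexx ?orbT.
Qed.

Lemma max_upto_attained f k : exists2 j, (j <= k)%N & max_upto f k = f j.
Proof.
elim: k => [|k [j jk IH]] /=; first by exists 0%N.
have [le_fk|lt_fk] := leP (max_upto f k) (f k.+1); first by exists k.+1.
by exists j; [apply: leqW | rewrite IH].
Qed.

End MaxUpto.

Section FamilyLattice.
Variables (R : realType) (X : normedModType R) (alpha : (nat -> X) -> R).
Hypothesis halpha : left_tensorial alpha.

Record contractive_family := ContractiveFamily {
  cf_len : nat;
  cf_fun : nat -> {scalar X};
  cf_bound : forall k (z : nat -> X),
    \sum_(i < cf_len) max_upto (fun j => `|cf_fun i (z j)|) k
      <= unit_tensor_norm alpha k.+1 z }.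

Lemma empty_family_bound k (z : nat -> X) :
  \sum_(i < 0) max_upto (fun j => `|(\0 : {scalar X}) (z j)|) k
    <= unit_tensor_norm alpha k.+1 z.
Proof. by rewrite big_ord0 unit_tensor_norm_ge0. Qed.

Definition empty_family : contractive_family :=
  @ContractiveFamily 0 (fun=> \0) empty_family_bound.

Definition rowsum (F : contractive_family -> nat -> R) (A : contractive_family) : R :=
  \sum_(i < cf_len A) `|F A i|.

(* [F A] vanishes from [cf_len A] on, i.e. it is a vector of l_1^(cf_len A). *)
Definition row_bounded (F : contractive_family -> nat -> R) : Prop :=
  (exists M, forall A, rowsum F A <= M) /\ (forall A i, (cf_len A <= i)%N -> F A i = 0).

Lemma rowsumD_le F G A : rowsum (F + G) A <= rowsum F A + rowsum G A.
Proof. by rewrite /rowsum -big_split /=; apply: ler_sum => i _; apply: ler_normD. Qed.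

Lemma rowsumZ (a : R) F A : rowsum (a *: F) A = `|a| * rowsum F A.
Proof. by rewrite /rowsum mulr_sumr; apply: eq_bigr => i _; rewrite normrM. Qed.

Definition row_bounded_pred : {pred contractive_family -> nat -> R} :=
  fun F => `[< row_bounded F >].

Lemma row_bounded_submod_closed : submod_closed row_bounded_pred.
Proof.
split.
  apply/asboolP; split=> //; exists 0 => A.
  by rewrite /rowsum big1 // => i _; rewrite normr0.
move=> a F G /asboolP[[MF hF] zF] /asboolP[[MG hG] zG]; apply/asboolP; split.
  exists (`|a| * MF + MG) => A; apply: le_trans (rowsumD_le _ _ A) _.
  by rewrite rowsumZ lerD // ler_wpM2l.
by move=> A i iA; rewrite !fctE zF // zG // scaler0 addr0.
Qed.

HB.instance Definition _ := GRing.isSubmodClosed.Build R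
  (contractive_family -> nat -> R) row_bounded_pred row_bounded_submod_closed.

Record family_lattice := FamilyLattice {
  fl_val :> contractive_family -> nat -> R;
  _ : fl_val \in row_bounded_pred }.

HB.instance Definition _ := [isSub for fl_val].
HB.instance Definition _ := [Choice of family_lattice by <:].
HB.instance Definition _ := [SubChoice_isSubLmodule of family_lattice by <:].

Lemma fl_row_bounded (F : family_lattice) : row_bounded F.
Proof. exact/asboolP/(valP F). Qed.

Lemma fl_valD (F G : family_lattice) : fl_val (F + G) = fl_val F + fl_val G.
Proof. by []. Qed.

Lemma fl_valZ (a : R) (F : family_lattice) : fl_val (a *: F) = a *: fl_val F.
Proof. by []. Qed.

Lemma fl_valB (F G : family_lattice) : fl_val (F - G) = fl_val F - fl_val G.
Proof. by []. Qed.

Definition fl_norm (F : family_lattice) : R := sup (range (rowsum F)).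

Lemma has_sup_rowsum (F : family_lattice) : has_sup (range (rowsum F)).
Proof.
have [[M hM] _] := fl_row_bounded F.
by split; [exists (rowsum F empty_family), empty_family | exists M => _ [A _ <-]].
Qed.

Lemma rowsum_le_fl_norm (F : family_lattice) A : rowsum F A <= fl_norm F.
Proof. by apply: ub_le_sup; [exact: (has_sup_rowsum F).2 | exists A]. Qed.

Lemma fl_norm_le (F : family_lattice) c : (forall A, rowsum F A <= c) -> fl_norm F <= c.
Proof. by move=> h; apply: ge_sup; [exact: (has_sup_rowsum F).1 | move=> _ [A _ <-]]. Qed.

Lemma fl_norm_ge0 (F : family_lattice) : 0 <= fl_norm F.
Proof. by apply: le_trans (rowsum_le_fl_norm F empty_family); rewrite /rowsum big_ord0. Qed.

Lemma coord_le_fl_norm (F : family_lattice) A i : `|F A i| <= fl_norm F.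
Proof.
have [iA|Ai] := ltnP i (cf_len A); last by rewrite (fl_row_bounded F).2 // normr0 fl_norm_ge0.
apply: le_trans (rowsum_le_fl_norm F A); rewrite /rowsum (bigD1 (Ordinal iA)) //= lerDl.
exact: sumr_ge0.
Qed.

Lemma fl_normD (F G : family_lattice) : fl_norm (F + G) <= fl_norm F + fl_norm G.
Proof.
apply: fl_norm_le => A; rewrite fl_valD; apply: le_trans (rowsumD_le F G A) _.
by apply: lerD; apply: rowsum_le_fl_norm.
Qed.

Lemma fl_normZ_le (a : R) (F : family_lattice) : fl_norm (a *: F) <= `|a| * fl_norm F.
Proof.
apply: fl_norm_le => A; rewrite fl_valZ rowsumZ.
by rewrite ler_wpM2l // rowsum_le_fl_norm.
Qed.

Lemma fl_normZ (a : R) (F : family_lattice) : fl_norm (a *: F) = `|a| * fl_norm F.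
Proof.
apply/eqP; rewrite eq_le fl_normZ_le /=.
have [->|a0] := eqVneq a 0; first by rewrite normr0 mul0r fl_norm_ge0.
have := fl_normZ_le a^-1 (a *: F); rewrite scalerA mulVf // scale1r => h.
by rewrite -ler_pdivlMl ?normr_gt0 // -normrV // unitfE.
Qed.

Lemma fl_norm_eq0 (F : family_lattice) : fl_norm F = 0 -> F = 0.
Proof.
move=> F0; apply: val_inj; apply/funext => A; apply/funext => i /=.
by apply/normr0_eq0/le_anti; rewrite normr_ge0 -F0 coord_le_fl_norm.
Qed.

HB.instance Definition _ := Lmodule_isNormed.Build R family_lattice fl_normD fl_normZ fl_norm_eq0.

Lemma fl_normE (F : family_lattice) : `|F| = fl_norm F.
Proof. by []. Qed.

Section Completeness.
Variable FF : set_system family_lattice.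
Hypotheses (FF_proper : ProperFilter FF) (FF_cauchy : cauchy FF).

Let FF_filter : Filter FF := FF_proper.

Let near_dist e : 0 < e -> \forall F & G \near FF, `|F - G| < e.
Proof.
move=> e0; have /cauchy_ballP Fc := FF_cauchy.
by apply: filterS (Fc e e0) => -[F G]; rewrite -ball_normE /ball_ /= distrC.
Qed.

Lemma cauchy_coord_cvg A i : cvg ((fun F : family_lattice => F A i) @ FF).
Proof.
apply: cauchy_cvg; apply/cauchy_ballP => e e0; rewrite near_map2.
apply: filterS (near_dist e0) => -[F G] /= FG; rewrite -ball_normE /ball_ /=.
apply: le_lt_trans FG; rewrite fl_normE; apply: le_trans (coord_le_fl_norm (F - G) A i).
by rewrite fl_valB !fctE.
Qed.

Let glim A i := if (i < cf_len A)%N then lim ((fun F : family_lattice => F A i) @ FF) else 0.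

Lemma cauchy_rowsum_near e : 0 < e ->
  \forall F \near FF, forall A, rowsum (fl_val F - glim) A <= e.
Proof.
move=> e0; have near_dist_dep := nearP_dep (near_dist e0).
apply: filterS (near_dist_dep FF_filter FF_filter) => F FG A.
have -> : rowsum (fl_val F - glim) A =
    \sum_(i < cf_len A) `|F A i - lim ((fun G : family_lattice => G A i) @ FF)|.
  by apply: eq_bigr => i _; rewrite !fctE /glim ltn_ord.
apply: (@cvgr_to_le _ FF FF_proper _
  (fun G : family_lattice => \sum_(i < cf_len A) `|F A i - G A i|)).
  have := @cvg_big _ _ +%R 0 xpredT add_continuous _ FF (index_enum 'I_(cf_len A))
    (fun i (G : family_lattice) => `|F A i - G A i|)
    (fun i => `|F A i - lim ((fun G : family_lattice => G A i) @ FF)|) FF_filter.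
  apply=> i _; apply: cvg_norm; apply: cvgB; first exact: cvg_cst.
  exact: cauchy_coord_cvg.
apply: filterS FG => G FG; apply/ltW; apply: le_lt_trans FG.
by rewrite fl_normE; apply: le_trans (rowsum_le_fl_norm _ A); rewrite fl_valB.
Qed.

Lemma glim_row_bounded : row_bounded glim.
Proof.
split; last by move=> A i Ai; rewrite /glim ltnNge Ai.
have [F FF1] := filter_ex (cauchy_rowsum_near ltr01).
exists (fl_norm F + 1) => A; apply: le_trans (lerD (rowsum_le_fl_norm F A) (FF1 A)).
rewrite /rowsum -big_split /=; apply: ler_sum => i _.
by rewrite !fctE; have := ler_normB (F A i) (F A i - glim A i); rewrite subKr.
Qed.

Lemma family_lattice_cauchy_cvg : cvg FF.
Proof.
apply/cvg_ex; exists (FamilyLattice (asboolT glim_row_bounded)); apply/fcvgrPdist_lt => e e0.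
have e20 : 0 < e / 2 by rewrite divr_gt0.
apply: filterS (cauchy_rowsum_near e20) => F FA.
apply: (@le_lt_trans _ _ (e / 2)); last by rewrite ltr_pdivrMr // ltr_pMr // ltr1n.
rewrite fl_normE; apply: fl_norm_le => A; apply: le_trans (FA A).
by rewrite fl_valB /rowsum; apply: ler_sum => i _; rewrite !fctE distrC.
Qed.

End Completeness.

HB.instance Definition _ :=
  Uniform_isComplete.Build family_lattice family_lattice_cauchy_cvg.

Definition fl_le (F G : family_lattice) : Prop := forall A i, F A i <= G A i.

Lemma row_bounded_max (F G : family_lattice) :
  row_bounded (fun A i => Num.max (F A i) (G A i)).
Proof.
have [[MF hF] zF] := fl_row_bounded F; have [[MG hG] zG] := fl_row_bounded G.
split; last by move=> A i Ai; rewrite zF // zG // maxxx.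
exists (MF + MG) => A; apply: le_trans (lerD (hF A) (hG A)).
rewrite /rowsum -big_split; apply: ler_sum => i _ /=.
by rewrite maxEle; case: ifP => _; rewrite ?lerDl ?lerDr.
Qed.

Definition fl_join (F G : family_lattice) : family_lattice :=
  FamilyLattice (asboolT (row_bounded_max F G)).

Lemma fl_le_refl F : fl_le F F.
Proof. by []. Qed.

Lemma fl_le_anti F G : fl_le F G -> fl_le G F -> F = G.
Proof.
move=> FG GF; apply: val_inj; apply/funext => A; apply/funext => i.
by apply/le_anti; rewrite FG GF.
Qed.

Lemma fl_le_trans F G H : fl_le F G -> fl_le G H -> fl_le F H.
Proof. by move=> FG GH A i; apply: le_trans (FG A i) (GH A i). Qed.

Lemma fl_le_add F G H : fl_le F G -> fl_le (F + H) (G + H).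
Proof. by move=> FG A i; rewrite !fl_valD !fctE lerD2r. Qed.

Lemma fl_le_scale (a : R) F G : 0 <= a -> fl_le F G -> fl_le (a *: F) (a *: G).
Proof. by move=> a0 FG A i; rewrite !fl_valZ !fctE ler_wpM2l. Qed.

Lemma fl_join_l F G : fl_le F (fl_join F G).
Proof. by move=> A i; rewrite le_max lexx. Qed.

Lemma fl_join_r F G : fl_le G (fl_join F G).
Proof. by move=> A i; rewrite le_max lexx orbT. Qed.

Lemma fl_join_least F G H : fl_le F H -> fl_le G H -> fl_le (fl_join F G) H.
Proof. by move=> FH GH A i; rewrite ge_max FH GH. Qed.

Lemma fl_joinN F A i : fl_join F (- F) A i = `|F A i|.
Proof. by change (Num.max (F A i) (- F A i) = `|F A i|); rewrite maxrN. Qed.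

Lemma fl_norm_mono F G : fl_le (fl_join F (- F)) (fl_join G (- G)) -> `|F| <= `|G|.
Proof.
move=> FG; rewrite !fl_normE; apply: fl_norm_le => A; apply: le_trans (rowsum_le_fl_norm G A).
by apply: ler_sum => i _; rewrite -!fl_joinN.
Qed.

Definition family_banach_lattice : banach_lattice R :=
  @BanachLattice R family_lattice fl_le fl_join fl_le_refl fl_le_anti fl_le_trans
    fl_le_add fl_le_scale fl_join_l fl_join_r fl_join_least fl_norm_mono.

Section DominatedFamily.
Variables (m : nat) (phi : {scalar nat -> X}).
Hypothesis phi_le : forall v, phi v <= unit_tensor_norm alpha m v.

Lemma dominated_family_bound k (z : nat -> X) :
  \sum_(i < m) max_upto (fun j => `|(phi \o unit_slice i) (z j)|) k
    <= unit_tensor_norm alpha k.+1 z.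
Proof.
have [j jk j_max] : exists2 j : nat -> nat, forall i, (j i <= k)%N &
    forall i, max_upto (fun j => `|phi (unit_slice i (z j))|) k = `|phi (unit_slice i (z (j i)))|.
  suff /choice[j hj] : forall i, exists j, (j <= k)%N /\
      max_upto (fun j => `|phi (unit_slice i (z j))|) k = `|phi (unit_slice i (z j))|.
    by exists j => i; case: (hj i).
  move=> i; have [j jk ->] := max_upto_attained (fun j => `|phi (unit_slice i (z j))|) k.
  by exists j.
pose s i := Num.sg (phi (unit_slice i (z (j i)))).
pose y i := s i *: z (j i).
have -> : \sum_(i < m) max_upto (fun j => `|(phi \o unit_slice i) (z j)|) k =
    phi (tensor_of m (@unit_vec R) y).
  rewrite tensor_of_unit_vec_sum linear_sum; apply: eq_bigr => i _.
  by rewrite /= j_max normrEsg /y !linearZ.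
apply: le_trans (phi_le _) _; rewrite unit_tensor_norm_trunc //.
apply: (unit_tensor_norm_reindex halpha (f := j) (c := s)) => [i|i _].
  by rewrite normr_sg; case: (_ != 0).
by split; rewrite ?ltnS.
Qed.

Definition dominated_family : contractive_family :=
  @ContractiveFamily m (fun i => phi \o unit_slice i) dominated_family_bound.

End DominatedFamily.

Lemma exists_norming_family m (y : nat -> X) :
  exists A : contractive_family, cf_len A = m /\
    \sum_(i < cf_len A) cf_fun A i (y i) = unit_tensor_norm alpha m y.
Proof.
have [phi phi_le phi_y] :=
  hahn_banach (tensor_of m (@unit_vec R) y) (unit_tensor_norm_sublinear halpha m).
exists (dominated_family phi_le); split=> //=.
by rewrite -unit_tensor_norm_trunc // -phi_y tensor_of_unit_vec_sum linear_sum.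
Qed.

Lemma fl_norm_max_upto k (y : nat -> X) (F : family_lattice) :
  (forall A (i : 'I_(cf_len A)), `|F A i| = max_upto (fun j => `|cf_fun A i (y j)|) k) ->
  fl_norm F = unit_tensor_norm alpha k.+1 y.
Proof.
move=> FE; apply/le_anti/andP; split.
  by apply: fl_norm_le => A; rewrite /rowsum (eq_bigr _ (fun i _ => FE A i)) cf_bound.
have [A [lenA <-]] := exists_norming_family k.+1 y.
apply: le_trans (rowsum_le_fl_norm F A); apply: ler_sum => i _.
rewrite FE; apply: le_trans (ler_norm _) _.
by apply: (max_upto_ub (fun j => `|cf_fun A i (y j)|)); rewrite -ltnS -lenA.
Qed.

Definition embed_fun (x : X) : contractive_family -> nat -> R :=
  fun A i => if (i < cf_len A)%N then cf_fun A i x else 0.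

Lemma embed_row_bounded x : row_bounded (embed_fun x).
Proof.
split; last by move=> A i Ai; rewrite /embed_fun ltnNge Ai.
exists `|x| => A; rewrite -(unit_tensor_norm1 halpha (fun=> x)).
apply: le_trans (cf_bound A 0 (fun=> x)); apply: ler_sum => i _.
by rewrite /embed_fun ltn_ord.
Qed.

Definition fl_embed (x : X) : family_lattice := FamilyLattice (asboolT (embed_row_bounded x)).

Lemma fl_embed_linear (a : R) x y : fl_embed (a *: x + y) = a *: fl_embed x + fl_embed y.
Proof.
apply: val_inj; apply/funext => A; apply/funext => i.
rewrite /= !fctE /embed_fun; case: ifP => _; last by rewrite scaler0 addr0.
by rewrite linearP.
Qed.

Lemma sup_abs_embedE k (y : nat -> X) A i : (i < cf_len A)%N ->
  fl_val (bl_sup_upto (L := family_banach_lattice)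
    (fun j => bl_abs (L := family_banach_lattice) (fl_embed (y j))) k) A i
  = max_upto (fun j => `|cf_fun A i (y j)|) k.
Proof.
move=> iA; elim: k => [|k IH]; first by rewrite /= !fctE maxrN /embed_fun iA.
by rewrite /= IH !fctE maxrN /embed_fun iA.
Qed.

End FamilyLattice.

Theorem theorem1p7 (R : realType) (X : completeNormedModType R)
  (alpha : (nat -> X) -> R) :
  left_tensorial alpha ->
  exists (L : banach_lattice R) (J : X -> L),
    linear_isometry J /\
    forall (k : nat) (y : nat -> X),
      `| bl_sup_upto (fun j => bl_abs (J (y j))) k |
        = alpha (fun n => \sum_(j < k.+1) unit_vec j n *: y j).
Proof.
move=> halpha; exists (family_banach_lattice halpha), (fl_embed halpha); split.
  split=> [a x y|x]; first exact: fl_embed_linear.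
  rewrite fl_normE (fl_norm_max_upto halpha (k := 0) (y := fun=> x)) ?unit_tensor_norm1 // => A i.
  by rewrite /= /embed_fun ltn_ord.
move=> k y; rewrite fl_normE (fl_norm_max_upto halpha (k := k) (y := y)) // => A i.
rewrite sup_abs_embedE // ger0_norm //.
exact: le_trans (max_upto_ub _ (leq0n k)).
Qed.
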